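(* (Completeness.) For every formula $\phi$ of the language $\Phi$: if $h\Vdash\phi$ for every history $h$ of every regular epistemic transition system, then $\vdash\phi$.
   Context: Fix a set of agents $\mathcal{A}$. A coalition is a subset of $\mathcal{A}$. The language $\Phi$ is given by $\phi ::= p \mid \neg\phi \mid \phi\to\phi \mid \mathsf{K}_C\phi \mid \mathsf{H}_C\phi$, where $p$ ranges over propositional variables and $C\subseteq\mathcal{A}$; $\bot,\top$ are defined as usual. Axioms: all propositional tautologies of $\Phi$ and (1) Truth: $\mathsf{K}_C\phi\to\phi$; (2) Negative Introspection: $\neg\mathsf{K}_C\phi\to\mathsf{K}_C\neg\mathsf{K}_C\phi$; (3) Distributivity: $\mathsf{K}_C(\phi\to\psi)\to(\mathsf{K}_C\phi\to\mathsf{K}_C\psi)$; (4) Monotonicity: $\mathsf{K}_C\phi\to\mathsf{K}_D\phi$ if $C\subseteq D$; (5) Strategic Positive Introspection: $\mathsf{H}_C\phi\to\mathsf{K}_C\mathsf{H}_C\phi$; (6) Cooperation: $\mathsf{H}_C(\phi\to\psi)\to(\mathsf{H}_D\phi\to\mathsf{H}_{C\cup D}\psi)$ where $C\cap D=\varnothing$; (7) Empty Coalition: $\mathsf{K}_\varnothing\phi\to\mathsf{H}_\varnothing\phi$; (8) Perfect Recall: $\mathsf{H}_D\phi\to\mathsf{H}_D\mathsf{K}_C\phi$ where $D\subseteq C\neq\varnothing$; (9) Unachievability of Falsehood: $\neg\mathsf{H}_C\bot$. $\vdash\phi$ means $\phi$ is derivable from the axioms using Necessitation ($\phi/\mathsf{K}_C\phi$),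 Strategic Necessitation ($\phi/\mathsf{H}_C\phi$) and Modus Ponens. An epistemic transition system is a tuple $(W,\{\sim_a\}_{a\in\mathcal{A}},V,M,\pi)$ with $W$ a set of states, each $\sim_a$ an equivalence relation on $W$, $V$ a nonempty set (domain of choices), $M\subseteq W\times V^{\mathcal{A}}\times W$, and $\pi$ mapping propositional variables to subsets of $W$. It is regular if for every $w\in W$ and $\mathbf{s}\in V^{\mathcal{A}}$ there is $w'$ with $(w,\mathbf{s},w')\in M$. A strategy profile of coalition $C$ is an element of $V^C$; for profiles $\mathbf{s}_1\in V^{C_1},\mathbf{s}_2\in V^{C_2}$ and $C\subseteq C_1\cap C_2$, $\mathbf{s}_1=_C\mathbf{s}_2$ means $(\mathbf{s}_1)_a=(\mathbf{s}_2)_a$ for all $a\in C$. A history is a sequence $(w_0,\mathbf{s}_1,w_1,\dots,\mathbf{s}_n,w_n)$, $n\ge0$, with $w_i\in W$, $\mathbf{s}_i\in V^{\mathcal{A}}$, $(w_i,\mathbf{s}_{i+1},w_{i+1})\in M$ for $i<n$; $hd(h)$ is its last element and $h::\mathbf{s}::w$ denotes extension by $\mathbf{s},w$. For histories $h=(w_0,\mathbf{s}_1,\dots,w_n)$, $h'=(w'_0,\mathbf{s}'_1,\dots,w'_m)$ and agent $a$, $h\approx_a h'$ iff $n=m$, $w_i\sim_a w'_i$ for all $i$, and $(\mathbf{s}_i)_a=(\mathbf{s}'_i)_a$ for all $i$; $h\approx_C h'$ iff $h\approx_a h'$ for all $a\in C$ (so $\approx_\varnothing$ relates any two histories). Satisfaction: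 $h\Vdash p$ iff $hd(h)\in\pi(p)$; Boolean clauses as usual; $h\Vdash\mathsf{K}_C\phi$ iff $h'\Vdash\phi$ for every history $h'$ with $h\approx_C h'$; $h\Vdash\mathsf{H}_C\phi$ iff there is $\mathbf{s}\in V^C$ such that for every history $h'::\mathbf{s}'::w'$ with $h\approx_C h'$ and $\mathbf{s}=_C\mathbf{s}'$ we have $h'::\mathbf{s}'::w'\Vdash\phi$. *)

From Stdlib Require Import List Bool.
Set Implicit Arguments.

Section Logic.
Variable Agent : Type.

Definition coalition := Agent -> Prop.
Definition csubset (C D : coalition) : Prop := forall a, C a -> D a.
Definition cunion (C D : coalition) : coalition := fun a => C a \/ D a.
Definition cdisjoint (C D : coalition) : Prop := forall a, ~ (C a /\ D a).
Definition cempty : coalition := fun _ => False.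
Definition cnonempty (C : coalition) : Prop := exists a, C a.

Inductive form : Type :=
| Var : nat -> form
| Neg : form -> form
| Imp : form -> form -> form
| Kn : coalition -> form -> form
| Hw : coalition -> form -> form.

Definition Top : form := Imp (Var 0) (Var 0).
Definition Bot : form := Neg Top.

(* Propositional tautologies: formulas true under every boolean valuation
   of their maximal non-Boolean subformulas (variables, K_C phi, H_C phi). *)
Fixpoint tval (v : form -> bool) (f : form) : bool :=
  match f with
  | Var p => v (Var p)
  | Neg g => negb (tval v g)
  | Imp g h => implb (tval v g) (tval v h)
  | Kn C g => v (Kn C g)
  | Hw C g => v (Hw C g)
  end.
Definition tautology (f : form) : Prop := forall v, tval v f = true.

Inductive derivable : form -> Prop :=
| ax_taut f : tautology f -> derivable f
| ax_truth C f : derivable (Imp (Kn C f) f)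
| ax_neg_intro C f : derivable (Imp (Neg (Kn C f)) (Kn C (Neg (Kn C f))))
| ax_distr C f g : derivable (Imp (Kn C (Imp f g)) (Imp (Kn C f) (Kn C g)))
| ax_mono C D f : csubset C D -> derivable (Imp (Kn C f) (Kn D f))
| ax_spi C f : derivable (Imp (Hw C f) (Kn C (Hw C f)))
| ax_coop C D f g : cdisjoint C D ->
    derivable (Imp (Hw C (Imp f g)) (Imp (Hw D f) (Hw (cunion C D) g)))
| ax_empty f : derivable (Imp (Kn cempty f) (Hw cempty f))
| ax_recall C D f : csubset D C -> cnonempty C ->
    derivable (Imp (Hw D f) (Hw D (Kn C f)))
| ax_unach C : derivable (Neg (Hw C Bot))
| r_nec C f : derivable f -> derivable (Kn C f)
| r_snec C f : derivable f -> derivable (Hw C f)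
| r_mp f g : derivable (Imp f g) -> derivable f -> derivable g.

Record ETS : Type := {
  W : Type;
  sim : Agent -> W -> W -> Prop;
  sim_refl : forall a w, sim a w w;
  sim_sym : forall a w u, sim a w u -> sim a u w;
  sim_trans : forall a w u x, sim a w u -> sim a u x -> sim a w x;
  V : Type;
  V_inhabited : inhabited V;
  M : W -> (Agent -> V) -> W -> Prop;
  pi : nat -> W -> Prop
}.

Definition regular (E : ETS) : Prop :=
  forall (w : W E) (s : Agent -> V E), exists w', M E w s w'.

Inductive hist (E : ETS) : Type :=
| hInit : W E -> hist E
| hExt : hist E -> (Agent -> V E) -> W E -> hist E.

Definition hd (E : ETS) (h : hist E) : W E :=
  match h with hInit _ w => w | hExt _ s w => w end.

Fixpoint is_hist (E : ETS) (h : hist E) : Prop :=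
  match h with
  | hInit _ _ => True
  | hExt h' s w => is_hist h' /\ M E (hd h') s w
  end.

Fixpoint hsim_a (E : ETS) (a : Agent) (h h' : hist E) : Prop :=
  match h, h' with
  | hInit _ w, hInit _ w' => sim E a w w'
  | hExt h1 s w, hExt h1' s' w' => hsim_a a h1 h1' /\ s a = s' a /\ sim E a w w'
  | _, _ => False
  end.

(* h ~_C h' iff h ~_a h' for all a in C; so ~_emptyset relates any two histories. *)
Definition hsim (E : ETS) (C : coalition) (h h' : hist E) : Prop :=
  forall a, C a -> hsim_a a h h'.

Definition agree_on (E : ETS) (C : coalition) (s s' : Agent -> V E) : Prop :=
  forall a, C a -> s a = s' a.

Fixpoint sat (E : ETS) (h : hist E) (f : form) : Prop :=
  match f with
  | Var p => pi E p (hd h)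
  | Neg g => ~ sat h g
  | Imp g k => sat h g -> sat h k
  | Kn C g => forall h', @is_hist E h' -> @hsim E C h h' -> sat h' g
  | Hw C g => exists s : Agent -> V E,
      forall h' s' w', @is_hist E (hExt h' s' w') -> @hsim E C h h' ->
        @agree_on E C s s' -> sat (hExt h' s' w') g
  end.

End Logic.

(* States are maximal consistent sets placed at the
   ends of paths in trees: an edge labelled C leads from X to a set containing every psi
   with K_C psi in X, and agent a cannot tell apart two states whose paths coincide once
   the trailing edges whose labels contain a are cut off.  By S5 reasoning the K_C-theory
   is the same at both ends of an edge labelled by a superset of C, which gives the K_C
   clause of the truth lemma.  The roots are all the maximal consistent sets with the
   K_empty-theory of the refuted one.

   An action is a profile of votes for pairs (chi, D).  A transition from X to Y is
   allowed when Y contains chi, and K_C chi for every nonempty C containing D, whenever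
   all of D vote for (chi, D) and H_D chi is in X.  Unanimous votes for distinct goals
   come from disjoint coalitions, so Cooperation turns every consequence of the goals
   fixed by the votes of C into a formula H_C phi of X: this is the H_C clause, and with
   Unachievability of Falsehood it makes the model regular.  To refute K_C f after an
   action s, one branches off the current state along a C-edge and keeps only the votes
   of C; Perfect Recall is what keeps the goals of that restricted action achieved. *)

From Pilot Require Import Defs.
From Stdlib Require Import List Classical FunctionalExtensionality PropExtensionality ClassicalEpsilon Lia.
From mathcomp Require classical_sets.
Import ListNotations.
Set Implicit Arguments.
Unset Strict Implicit.

Section Completeness.
Variable Agent : Type.
Notation form := (form Agent).
Notation coal := (coalition Agent).
Notation cempty := (@cempty Agent).
Notation Bot := (Bot Agent).
Notation Top := (Top Agent).

Ltac tval_cases :=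
  simpl in *;
  repeat match goal with
  | |- context [tval ?v ?x] => destruct (tval v x)
  | H : context [tval ?v ?x] |- _ => destruct (tval v x)
  | |- context [?v (?k ?x ?y)] =>
      lazymatch type of v with form -> bool => destruct (v (k x y)) end
  | H : context [?v (?k ?x ?y)] |- _ =>
      lazymatch type of v with form -> bool => destruct (v (k x y)) end
  end; simpl in *; try congruence; auto.

Definition chain (L : list form) (f : form) : form := fold_right (@Imp Agent) f L.

Definition tconseq (L : list form) (f : form) : Prop :=
  forall v, (forall e, In e L -> tval v e = true) -> tval v f = true.

Lemma tval_chain v L f :
  tval v (chain L f) = true <-> ((forall e, In e L -> tval v e = true) -> tval v f = true).
Proof.
  induction L as [|e L IH]; simpl.
  - firstorder.
  - destruct (tval v e) eqn:He; simpl; rewrite ?IH.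
    + split; intros H1 H2; apply H1; [intros; apply H2; auto|].
      intros x [<-|Hx]; auto.
    + split; [|reflexivity]. intros _ H. rewrite (H e (or_introl eq_refl)) in He. discriminate.
Qed.

Lemma tautology_chain L f : tconseq L f -> derivable (chain L f).
Proof. intros H. apply ax_taut. intros v. apply tval_chain, H. Qed.

Lemma derivable_chain_mp L f :
  (forall e, In e L -> derivable e) -> derivable (chain L f) -> derivable f.
Proof.
  induction L as [|e L IH]; simpl; auto.
  intros HL D. apply IH; auto. exact (r_mp D (HL e (or_introl eq_refl))).
Qed.

Lemma derivable_tconseq L f : tconseq L f -> (forall e, In e L -> derivable e) -> derivable f.
Proof. intros H HL. exact (derivable_chain_mp HL (tautology_chain H)). Qed.

Lemma derivable_tauto1 (A B : form) :
  (forall v, tval v A = true -> tval v B = true) -> derivable A -> derivable B.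
Proof.
  intros H DA. apply (derivable_tconseq (L := [A])); [|intros e [<-|[]]; exact DA].
  intros v HL. apply H, HL. left; reflexivity.
Qed.

Lemma derivable_tauto2 (A B C : form) :
  (forall v, tval v A = true -> tval v B = true -> tval v C = true) ->
  derivable A -> derivable B -> derivable C.
Proof.
  intros H DA DB. apply (derivable_tconseq (L := [A; B])); [|intros e [<-|[<-|[]]]; assumption].
  intros v HL. apply H; apply HL; simpl; auto.
Qed.

Lemma derivable_imp_trans (a b c : form) :
  derivable (Imp a b) -> derivable (Imp b c) -> derivable (Imp a c).
Proof. apply derivable_tauto2. intros v. tval_cases. Qed.

Lemma derivable_imp_refl (a : form) : derivable (Imp a a).
Proof. apply ax_taut. intros v. tval_cases. Qed.

Definition proves (G : form -> Prop) (f : form) : Prop :=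
  exists L, (forall e, In e L -> G e) /\ derivable (chain L f).

Definition insert (G : form -> Prop) (a : form) : form -> Prop := fun x => G x \/ x = a.

Lemma proves_derivable G f : derivable f -> proves G f.
Proof. intros H. exists []. split; [intros e []|exact H]. Qed.

Lemma proves_mem G f : G f -> proves G f.
Proof.
  intros H. exists [f]. split; [intros e [<-|[]]; exact H|].
  apply tautology_chain. intros v HL. apply HL. left; reflexivity.
Qed.

Lemma proves_mono (G D : form -> Prop) f : (forall x, G x -> D x) -> proves G f -> proves D f.
Proof. intros S [L [HL D']]. exists L; auto. Qed.

Lemma proves_mp G a b : proves G (Imp a b) -> proves G a -> proves G b.
Proof.
  intros [L1 [H1 D1]] [L2 [H2 D2]]. exists (L1 ++ L2). split.
  - intros e He. apply in_app_or in He. destruct He; auto.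
  - revert D1 D2. apply derivable_tauto2. intros v T1 T2.
    rewrite tval_chain in T1, T2 |- *. intros Hall.
    specialize (T1 (fun e h => Hall e (in_or_app _ _ _ (or_introl h)))).
    specialize (T2 (fun e h => Hall e (in_or_app _ _ _ (or_intror h)))).
    simpl in T1. rewrite T2 in T1. exact T1.
Qed.

Lemma proves_tconseq G L f : tconseq L f -> (forall e, In e L -> proves G e) -> proves G f.
Proof.
  intros H HL. apply tautology_chain, (proves_derivable G) in H. revert H HL.
  induction L as [|e L IH]; simpl; auto.
  intros H HL. apply IH; auto. exact (proves_mp H (HL e (or_introl eq_refl))).
Qed.

Lemma proves_tauto1 G (A B : form) :
  (forall v, tval v A = true -> tval v B = true) -> proves G A -> proves G B.
Proof.
  intros H PA. apply (proves_tconseq (L := [A])); [|intros e [<-|[]]; exact PA].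
  intros v HL. apply H, HL. left; reflexivity.
Qed.

Lemma proves_tauto2 G (A B C : form) :
  (forall v, tval v A = true -> tval v B = true -> tval v C = true) ->
  proves G A -> proves G B -> proves G C.
Proof.
  intros H PA PB. apply (proves_tconseq (L := [A; B])); [|intros e [<-|[<-|[]]]; assumption].
  intros v HL. apply H; apply HL; simpl; auto.
Qed.

Lemma proves_cut (G D : form -> Prop) f : (forall g, G g -> proves D g) -> proves G f -> proves D f.
Proof.
  intros H [L [HL Dv]]. apply (proves_tconseq (L := chain L f :: L)).
  - intros v HV. apply (tval_chain v L f); [apply HV; left; reflexivity|].
    intros e He. apply HV. right; exact He.
  - intros e [<-|He]; [apply proves_derivable; exact Dv|auto].
Qed.

Lemma list_remove_one (P : form -> Prop) a L : (forall e, In e L -> insert P a e) ->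
  exists L', (forall e, In e L' -> P e) /\ forall e, In e L -> In e L' \/ e = a.
Proof.
  induction L as [|e L IH]; intros HL.
  - exists []. split; intros e [].
  - destruct IH as [L' [H1 H2]]; [intros x Hx; apply HL; right; exact Hx|].
    destruct (HL e (or_introl eq_refl)) as [Pe| ->].
    + exists (e :: L'). split; [intros x [<-|Hx]; auto|].
      intros x [<-|Hx]; [left; left; reflexivity|]. destruct (H2 x Hx); simpl; auto.
    + exists L'. split; auto. intros x [<-|Hx]; auto.
Qed.

Lemma proves_deduction G a b : proves (insert G a) b -> proves G (Imp a b).
Proof.
  intros [L [HL D]]. destruct (list_remove_one HL) as [L' [HL' Hsub]].
  exists L'. split; auto. revert D. apply derivable_tauto1. intros v H.
  rewrite tval_chain in H |- *. intros Hall. simpl.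
  destruct (tval v a) eqn:Ha; simpl; auto. apply H.
  intros e He. destruct (Hsub e He) as [He'| ->]; auto.
Qed.

(** * Maximal consistent sets *)

Definition consistent (G : form -> Prop) : Prop := ~ proves G Bot.

Lemma underivable_consistent f : ~ derivable f -> consistent (fun x => x = Neg f).
Proof.
  intros Hn Hbot. apply Hn.
  apply (proves_mono (D := insert (fun _ => False) (Neg f))) in Hbot; [|right; assumption].
  apply proves_deduction in Hbot as [[|e L] [HL D]]; [|destruct (HL e (or_introl eq_refl))].
  refine (derivable_tauto1 _ D). intros v. tval_cases.
Qed.
Definition maximal_consistent (G : form -> Prop) : Prop :=
  consistent G /\ forall f, G f \/ G (Neg f).

Section MaximalConsistent.
Variable X : form -> Prop.
Hypothesis HX : maximal_consistent X.

Lemma mcs_proves f : proves X f -> X f.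
Proof.
  intros Hf. destruct (proj2 HX f) as [H|H]; auto. exfalso. apply (proj1 HX).
  apply (proves_tauto2 (A := f) (B := Neg f)); auto; [|apply proves_mem; exact H].
  intros v. tval_cases.
Qed.

Lemma mcs_derivable f : derivable f -> X f.
Proof. intros H. apply mcs_proves, proves_derivable, H. Qed.

Lemma mcs_neg f : X (Neg f) <-> ~ X f.
Proof.
  split.
  - intros Hn Hf. apply (proj1 HX).
    apply (proves_tauto2 (A := f) (B := Neg f)); try apply proves_mem; auto.
    intros v. tval_cases.
  - intros H. destruct (proj2 HX f); tauto.
Qed.

Lemma mcs_imp a b : X (Imp a b) <-> (X a -> X b).
Proof.
  split.
  - intros H Ha. apply mcs_proves. apply (proves_mp (a := a)); apply proves_mem; auto.
  - intros H. apply mcs_proves. destruct (proj2 HX a) as [Ha|Ha].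
    + apply (proves_tauto1 (A := b)); [intros v; tval_cases|]. apply proves_mem; auto.
    + apply (proves_tauto1 (A := Neg a)); [intros v; tval_cases|]. apply proves_mem; auto.
Qed.

Lemma mcs_mp a b : derivable (Imp a b) -> X a -> X b.
Proof. intros D Ha. apply (proj1 (mcs_imp a b)); auto. apply mcs_derivable, D. Qed.

End MaximalConsistent.

Lemma union_chain_list (T : Type) (G : T -> Prop) (F : (T -> Prop) -> Prop) L :
  (forall A B, F A -> F B -> (forall x, A x -> B x) \/ (forall x, B x -> A x)) ->
  (forall e, In e L -> G e \/ exists2 A, F A & A e) ->
  (forall e, In e L -> G e) \/ exists A, F A /\ forall e, In e L -> G e \/ A e.
Proof.
  intros Htot. induction L as [|e L IH]; intros HL.
  - left; intros e [].
  - destruct IH as [IH|[A [FA HA]]]; [intros x Hx; apply HL; right; exact Hx| |];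
      destruct (HL e (or_introl eq_refl)) as [Ge|[B FB Be]].
    + left. intros x [<-|Hx]; auto.
    + right. exists B. split; auto. intros x [<-|Hx]; auto.
    + right. exists A. split; auto. intros x [<-|Hx]; auto.
    + destruct (Htot A B FA FB) as [S|S].
      * right. exists B. split; auto. intros x [<-|Hx]; auto. destruct (HA x Hx); auto.
      * right. exists A. split; auto. intros x [<-|Hx]; auto.
Qed.

Lemma consistent_insert G f : consistent G -> consistent (insert G f) \/ consistent (insert G (Neg f)).
Proof.
  intros HG. apply NNPP. intros Hn. apply not_or_and in Hn as [H1 H2].
  apply NNPP in H1, H2. apply proves_deduction in H1, H2. apply HG.
  revert H1 H2. apply proves_tauto2. intros v. tval_cases.
Qed.

Lemma lindenbaum G : consistent G -> exists X, maximal_consistent X /\ forall x, G x -> X x.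
Proof.
  intros HG.
  destruct (@classical_sets.Zorn_bigcup form (fun A => consistent (fun x => G x \/ A x)))
    as [A [HA Amax]].
  - intros F FP Ftot [L [HL D]].
    destruct (union_chain_list Ftot HL) as [HG'|[B [FB HB]]].
    + apply HG. exists L. auto.
    + apply (FP B FB). exists L. auto.
  - exists (fun x => G x \/ A x). split; [split; [exact HA|]|auto].
    intros f. apply NNPP. intros Hn. apply not_or_and in Hn as [Hf Hnf].
    assert (Hgrow : forall g, ~ (G g \/ A g) -> ~ consistent (insert (fun x => G x \/ A x) g)).
    { intros g Hg Hc. apply (Amax (fun x => A x \/ x = g)).
      - split; [intros x; simpl; auto|]. intros S. apply Hg. right. apply S. right; reflexivity.
      - revert Hc. unfold consistent. intros Hc Hp. apply Hc.
        revert Hp. apply proves_mono. unfold insert. intros x; tauto. }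
    destruct (consistent_insert f HA) as [Hc|Hc]; revert Hc; apply Hgrow; assumption.
Qed.

Lemma Kn_monotone C (a b : form) : derivable (Imp a b) -> derivable (Imp (Kn C a) (Kn C b)).
Proof. intros H. exact (r_mp (ax_distr C a b) (r_nec C H)). Qed.

Lemma Kn_chain C L (f : form) :
  derivable (Imp (Kn C (chain L f)) (chain (map (Kn C) L) (Kn C f))).
Proof.
  induction L as [|e L IH]; simpl; [apply derivable_imp_refl|].
  revert IH. apply derivable_tauto2 with (A := Imp (Kn C (Imp e (chain L f))) (Imp (Kn C e) (Kn C (chain L f)))).
  - intros v. tval_cases.
  - apply ax_distr.
Qed.

Lemma mcs_Kn_proves X (G : form -> Prop) C f : maximal_consistent X ->
  (forall e, G e -> X (Kn C e)) -> proves G f -> X (Kn C f).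
Proof.
  intros HX HG [L [HL D]]. apply mcs_proves; auto.
  exists (map (Kn C) L). split.
  - intros e He. apply in_map_iff in He as [x [<- Hx]]. auto.
  - exact (r_mp (Kn_chain C L f) (r_nec C D)).
Qed.

Lemma Kn_pos_introspection C (f : form) : derivable (Imp (Kn C f) (Kn C (Kn C f))).
Proof.
  (* K f -> ~K~K f -> K~K~K f -> K K f *)
  assert (Hdual : derivable (Imp (Neg (Kn C (Neg (Kn C f)))) (Kn C f))).
  { refine (derivable_tauto1 _ (ax_neg_intro C f)). intros v. tval_cases. }
  apply (derivable_imp_trans (b := Neg (Kn C (Neg (Kn C f))))).
  - refine (derivable_tauto1 _ (ax_truth C (Neg (Kn C f)))). intros v. tval_cases.
  - exact (derivable_imp_trans (ax_neg_intro C (Neg (Kn C f))) (Kn_monotone C Hdual)).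
Qed.

Lemma coalition_ext (C D : coal) : (forall a, C a <-> D a) -> C = D.
Proof.
  intros H. apply functional_extensionality. intros a. apply propositional_extensionality, H.
Qed.

Lemma Hw_monotone D (a b : form) : derivable (Imp a b) -> derivable (Imp (Hw D a) (Hw D b)).
Proof.
  intros H.
  assert (Hcoop := @ax_coop Agent cempty D a b (fun x Hx => proj1 Hx)).
  replace (cunion cempty D) with D in Hcoop
    by (apply coalition_ext; unfold cunion, cempty; tauto).
  exact (r_mp Hcoop (r_snec cempty H)).
Qed.

Lemma Hw_coalition_monotone (F C : coal) (f : form) : csubset F C ->
  derivable (Imp (Hw F f) (Hw C f)).
Proof.
  (* F cooperates with C \ F, which trivially achieves Top. *)
  intros S. pose (D := fun a => C a /\ ~ F a).
  assert (Hcoop := @ax_coop Agent F D Top f (fun x Hx => proj2 (proj2 Hx) (proj1 Hx))).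
  replace (cunion F D) with C in Hcoop.
  2:{ apply coalition_ext. intros a. unfold cunion, D. split; [|intros [Ha|[Ha _]]; auto].
      intros Ha. destruct (classic (F a)); auto. }
  assert (HTop : derivable (Hw D Top)) by (apply r_snec, ax_taut; intros v; tval_cases).
  apply (derivable_imp_trans (b := Hw F (Imp Top f))).
  - apply Hw_monotone, ax_taut. intros v. tval_cases.
  - revert Hcoop HTop. apply derivable_tauto2. intros v. tval_cases.
Qed.

Inductive recall_item (D : coal) (chi : form) : form -> Prop :=
| recall_base : recall_item D chi chi
| recall_Kn C psi : recall_item D chi psi -> csubset D C -> cnonempty C ->
    recall_item D chi (Kn C psi).

Lemma Hw_recall_item D chi psi : recall_item D chi psi ->
  derivable (Imp (Hw D chi) (Hw D psi)).
Proof.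
  induction 1 as [|C psi _ IH HDC HC]; [apply derivable_imp_refl|].
  exact (derivable_imp_trans IH (ax_recall psi HDC HC)).
Qed.

Lemma Kn_recall_item D chi psi : cnonempty D -> recall_item D chi psi ->
  derivable (Imp (Kn D chi) psi).
Proof.
  intros HD. induction 1 as [|C psi _ IH HDC HC]; [apply ax_truth|].
  apply (derivable_imp_trans (Kn_pos_introspection D chi)).
  exact (derivable_imp_trans (ax_mono (Kn D chi) HDC) (Kn_monotone C IH)).
Qed.

(** * Votes and their goals *)

Definition vote : Type := option (form * coal).

Definition votes_for (s : Agent -> vote) (chi : form) (D : coal) : Prop :=
  forall a, D a -> s a = Some (chi, D).

Definition goals (X : form -> Prop) (s : Agent -> vote) : form -> Prop :=
  fun g => exists D chi, X (Hw D chi) /\ votes_for s chi D /\ recall_item D chi g.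

Definition leads (X : form -> Prop) (s : Agent -> vote) (Y : form -> Prop) : Prop :=
  forall g, goals X s g -> Y g.

Definition voters (s : Agent -> vote) (e : form) : coal :=
  fun a => exists D chi, e = Kn D chi /\ D a /\ s a = Some (chi, D).

Definition basic_goal (X : form -> Prop) (s : Agent -> vote) (e : form) : Prop :=
  (exists D chi, cnonempty D /\ X (Hw D chi) /\ votes_for s chi D /\ e = Kn D chi)
  \/ X (Hw cempty e).

Lemma goal_basic X s g : maximal_consistent X -> goals X s g -> proves (basic_goal X s) g.
Proof.
  intros HX [D [chi [HD [Hv Hit]]]].
  destruct (classic (cnonempty D)) as [Hne|Hemp].
  - apply (proves_mp (a := Kn D chi)).
    + apply proves_derivable, Kn_recall_item; assumption.
    + apply proves_mem. left. exists D, chi. auto.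
  - assert (D = cempty) as -> by (apply coalition_ext; firstorder).
    apply proves_mem. right. exact (mcs_mp HX (Hw_recall_item Hit) HD).
Qed.

Lemma basic_goal_voters X s e : maximal_consistent X -> basic_goal X s e ->
  X (Hw (voters s e) e).
Proof.
  intros HX [[D [chi [Hne [HD [Hv ->]]]]]|He].
  - refine (mcs_mp HX (Hw_coalition_monotone (F := D) _ _) _).
    + intros a Da. exists D, chi. auto.
    + exact (mcs_mp HX (ax_recall chi (fun a h => h) Hne) HD).
  - refine (mcs_mp HX (Hw_coalition_monotone _ _) He). intros a [].
Qed.

Lemma voters_unique s e e' a : voters s e a -> voters s e' a -> e = e'.
Proof.
  intros [D [chi [-> [_ H]]]] [D' [chi' [-> [_ H']]]].
  rewrite H in H'. injection H' as -> ->. reflexivity.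
Qed.

Lemma mcs_Hw_chain X (cl : form -> coal) L f : maximal_consistent X ->
  (forall e, In e L -> X (Hw (cl e) e)) ->
  (forall e e' a, cl e a -> cl e' a -> e = e') ->
  derivable (chain L f) -> X (Hw (fun a => exists2 e, In e L & cl e a) f).
Proof.
  intros HX. revert f. induction L as [|e L IH]; intros f Hach Huniq D.
  - apply mcs_derivable; [exact HX|]. apply r_snec, D.
  - assert (Hgrow : forall g, X (Hw (fun a => exists2 e', In e' L & cl e' a) g) ->
                              X (Hw (fun a => exists2 e', In e' (e :: L) & cl e' a) g)).
    { intros g. apply (mcs_mp HX), Hw_coalition_monotone.
      intros a [e' He' Ha]. exists e'; simpl; auto. }
    assert (HachL : forall e', In e' L -> X (Hw (cl e') e')) by (intros; apply Hach; simpl; auto).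
    destruct (classic (In e L)) as [Hin|Hnin].
    + apply Hgrow, IH; auto. refine (derivable_tauto1 _ D). intros v H.
      apply tval_chain. intros Hall. simpl in H. rewrite (Hall e Hin) in H.
      exact (proj1 (tval_chain v L f) H Hall).
    + assert (HU := IH (Imp e f) HachL Huniq).
      assert (Hdisj : cdisjoint (fun a => exists2 e', In e' L & cl e' a) (cl e)).
      { intros a [[e' He' Ha'] Ha]. apply Hnin. rewrite (Huniq e e' a Ha Ha'). exact He'. }
      refine (mcs_mp HX (Hw_coalition_monotone _ _) _); cycle 1.
      * refine (proj1 (mcs_imp HX _ _) _ (Hach e (or_introl eq_refl))).
        refine (proj1 (mcs_imp HX _ _) (mcs_derivable HX (ax_coop _ _ Hdisj)) _).
        apply HU. refine (derivable_tauto1 _ D). intros v H.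
        apply tval_chain. intros Hall. simpl in H |- *.
        destruct (tval v e); [exact (proj1 (tval_chain v L f) H Hall)|reflexivity].
      * intros a [[e' He' Ha]|Ha]; [exists e'|exists e]; simpl; auto.
Qed.

Lemma mcs_Hw_goals X s C phi : maximal_consistent X -> (forall a, ~ C a -> s a = None) ->
  proves (goals X s) phi -> X (Hw C phi).
Proof.
  intros HX Hs Hphi.
  destruct (proves_cut (fun g => goal_basic (s := s) (g := g) HX) Hphi) as [L [HL D]].
  assert (HU := mcs_Hw_chain HX (fun e He => basic_goal_voters HX (HL e He)) (@voters_unique s) D).
  refine (mcs_mp HX (Hw_coalition_monotone _ _) HU).
  intros a [e _ [D' [chi [_ [_ Ha]]]]]. apply NNPP. intros HnC.
  rewrite (Hs a HnC) in Ha. discriminate.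
Qed.

Lemma goals_extend X s C phi : maximal_consistent X -> (forall a, ~ C a -> s a = None) ->
  ~ X (Hw C phi) -> exists Y, maximal_consistent Y /\ leads X s Y /\ Y (Neg phi).
Proof.
  intros HX Hs Hn.
  destruct (@lindenbaum (insert (goals X s) (Neg phi))) as [Y [HY HGY]].
  - intros Hbot. apply Hn, (mcs_Hw_goals HX Hs).
    apply proves_deduction in Hbot. revert Hbot. apply proves_tauto1. intros v. tval_cases.
  - exists Y. split; [exact HY|split].
    + intros g Hg. apply HGY. left. exact Hg.
    + apply HGY. right. reflexivity.
Qed.

Lemma mcs_Kn_witness X C f : maximal_consistent X -> ~ X (Kn C f) ->
  exists Y, maximal_consistent Y /\ (forall psi, X (Kn C psi) -> Y psi) /\ Y (Neg f).
Proof.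
  intros HX Hn.
  destruct (@lindenbaum (insert (fun psi => X (Kn C psi)) (Neg f))) as [Y [HY HGY]].
  - intros Hbot. apply Hn, (mcs_Kn_proves (G := fun psi => X (Kn C psi))); auto.
    apply proves_deduction in Hbot. revert Hbot. apply proves_tauto1. intros v. tval_cases.
  - exists Y. split; [exact HY|split].
    + intros psi Hpsi. apply HGY. left. exact Hpsi.
    + apply HGY. right. reflexivity.
Qed.

Lemma mcs_Kn_edge X Y D C : maximal_consistent X -> maximal_consistent Y ->
  (forall psi, X (Kn D psi) -> Y psi) -> csubset C D ->
  forall psi, X (Kn C psi) <-> Y (Kn C psi).
Proof.
  intros HX HY HXY HCD psi. split.
  - intros H. apply HXY.
    exact (mcs_mp HX (derivable_imp_trans (Kn_pos_introspection C psi) (ax_mono _ HCD)) H).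
  - intros H. apply NNPP. intros Hn.
    assert (HXn : X (Kn D (Neg (Kn C psi)))).
    { refine (mcs_mp HX (derivable_imp_trans (ax_neg_intro C psi) (ax_mono _ HCD)) _).
      apply (mcs_neg HX). exact Hn. }
    exact (proj1 (mcs_neg HY _) (HXY _ HXn) H).
Qed.

Lemma leads_Kn_empty X s Y : maximal_consistent X -> maximal_consistent Y -> leads X s Y ->
  forall psi, Y (Kn cempty psi) <-> X (Kn cempty psi).
Proof.
  intros HX HY HXY psi.
  assert (Hgoal : forall g, X (Hw cempty g) -> Y g).
  { intros g Hg. apply HXY. exists cempty, g. split; [exact Hg|split; [intros a []|constructor]]. }
  split.
  - intros H. apply NNPP. intros Hn. refine (proj1 (mcs_neg HY _) _ H). apply Hgoal.
    refine (mcs_mp HX (derivable_imp_trans (ax_neg_intro _ psi) (ax_empty _)) _).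
    apply (mcs_neg HX). exact Hn.
  - intros H. apply Hgoal.
    exact (mcs_mp HX (derivable_imp_trans (Kn_pos_introspection _ psi) (ax_empty _)) H).
Qed.

Definition restrict (C : coal) (s : Agent -> vote) : Agent -> vote :=
  fun a => if excluded_middle_informative (C a) then s a else None.

Lemma restrict_in C s a : C a -> restrict C s a = s a.
Proof. unfold restrict. destruct (excluded_middle_informative (C a)); tauto. Qed.

Lemma restrict_out C s a : ~ C a -> restrict C s a = None.
Proof. unfold restrict. destruct (excluded_middle_informative (C a)); tauto. Qed.

Lemma leads_restrict X s Y C Z : leads X s Y -> cnonempty C ->
  (forall psi, Y (Kn C psi) -> Z psi) -> leads X (restrict C s) Z.
Proof.
  intros HXY HC HYZ g [D [chi [HD [Hv Hit]]]].
  assert (HDC : csubset D C).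
  { intros a Da. apply NNPP. intros HnC. specialize (Hv a Da).
    rewrite restrict_out in Hv by exact HnC. discriminate. }
  apply HYZ, HXY. exists D, chi. split; [exact HD|split].
  - intros a Da. rewrite <- (Hv a Da), restrict_in by (apply HDC; exact Da). reflexivity.
  - exact (recall_Kn Hit HDC HC).
Qed.

(** * The canonical model *)

(* The labelled edges from a root to a state, the most recent one first. *)
Definition path : Type := list (coal * (form -> Prop)).

Fixpoint strip (a : Agent) (p : path) : path :=
  match p with
  | [] => []
  | (C, Y) :: q => if excluded_middle_informative (C a) then strip a q else p
  end.

Lemma strip_cons_in a C Y q : C a -> strip a ((C, Y) :: q) = strip a q.
Proof. simpl. destruct (excluded_middle_informative (C a)); tauto. Qed.

Lemma strip_cons_out a C Y q : ~ C a -> strip a ((C, Y) :: q) = (C, Y) :: q.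
Proof. simpl. destruct (excluded_middle_informative (C a)); tauto. Qed.

Lemma strip_length a p : length (strip a p) <= length p.
Proof.
  induction p as [|[C Y] q IH]; simpl; [lia|].
  destruct (excluded_middle_informative (C a)); simpl; lia.
Qed.

Lemma strip_length_eq a p : length (strip a p) = length p -> strip a p = p.
Proof.
  destruct p as [|[C Y] q]; simpl; [reflexivity|].
  destruct (excluded_middle_informative (C a)); [|reflexivity].
  pose proof (strip_length a q). lia.
Qed.

Lemma strip_eq_pop C D Y p p' : length p' <= length ((D, Y) :: p) -> (D, Y) :: p <> p' ->
  (forall a, C a -> strip a ((D, Y) :: p) = strip a p') ->
  csubset C D /\ forall a, C a -> strip a p = strip a p'.
Proof.
  intros Hlen Hne Hs.
  assert (HCD : csubset C D).
  { intros a Ca. apply NNPP. intros HnD. apply Hne.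
    specialize (Hs a Ca). rewrite strip_cons_out in Hs by exact HnD.
    transitivity (strip a p'); [exact Hs|]. apply strip_length_eq.
    pose proof (strip_length a p'). rewrite <- Hs in *. simpl in *. lia. }
  split; [exact HCD|]. intros a Ca. rewrite <- (Hs a Ca). symmetry. apply strip_cons_in, HCD, Ca.
Qed.

Section CanonicalModel.
Variable X0 : form -> Prop.

Definition Kempty_agree (X : form -> Prop) : Prop :=
  forall psi, X (Kn cempty psi) <-> X0 (Kn cempty psi).

Definition last_state (r : form -> Prop) (p : path) : form -> Prop :=
  match p with [] => r | (_, Y) :: _ => Y end.

Fixpoint wf_path (r : form -> Prop) (p : path) : Prop :=
  match p with
  | [] => maximal_consistent r /\ Kempty_agree r
  | (C, Y) :: q => wf_path r q /\ maximal_consistent Y /\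
                   forall psi, last_state r q (Kn C psi) -> Y psi
  end.

Lemma wf_path_last r p : wf_path r p ->
  maximal_consistent (last_state r p) /\ Kempty_agree (last_state r p).
Proof.
  induction p as [|[C Y] q IH]; simpl; [tauto|].
  intros [Hq [HY HqY]]. destruct (IH Hq) as [Hlast Hagree]. split; [exact HY|].
  intros psi. rewrite <- (Hagree psi). symmetry.
  exact (mcs_Kn_edge Hlast HY HqY (fun a (Ha : cempty a) => match Ha with end) psi).
Qed.

Lemma wf_path_edge_Kn r D Y p C : wf_path r ((D, Y) :: p) -> csubset C D ->
  forall psi, last_state r p (Kn C psi) <-> Y (Kn C psi).
Proof.
  intros [Hp [HY HpY]] HCD. exact (mcs_Kn_edge (proj1 (wf_path_last Hp)) HY HpY HCD).
Qed.

Lemma strip_eq_Kn C r p p' : cnonempty C -> wf_path r p -> wf_path r p' ->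
  (forall a, C a -> strip a p = strip a p') ->
  forall psi, last_state r p (Kn C psi) <-> last_state r p' (Kn C psi).
Proof.
  intros HC. remember (length p + length p') as n eqn:Hn. revert p p' Hn.
  induction n as [n IH] using Wf_nat.lt_wf_ind. intros p p' Hn Hp Hp' Hs psi.
  assert (Hpop : forall q q', length q + length q' = n -> length q' <= length q -> q <> q' ->
            wf_path r q -> wf_path r q' -> (forall a, C a -> strip a q = strip a q') ->
            last_state r q (Kn C psi) <-> last_state r q' (Kn C psi)).
  { intros [|[D Y] q] q' Hn' Hlen Hne Hq Hq' Hsq.
    - destruct q' as [|x q']; [contradiction|simpl in Hlen; lia].
    - destruct (strip_eq_pop Hlen Hne Hsq) as [HCD Hsq'].
      rewrite <- (wf_path_edge_Kn Hq HCD psi).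
      apply (IH (length q + length q')); [simpl in Hn'; lia|reflexivity|apply Hq|exact Hq'|exact Hsq']. }
  destruct (classic (p = p')) as [<-|Hne]; [reflexivity|].
  destruct (Compare_dec.le_ge_dec (length p') (length p)) as [Hle|Hge].
  - exact (Hpop p p' (eq_sym Hn) Hle Hne Hp Hp' Hs).
  - symmetry. apply Hpop; auto; [lia|intros a Ca; symmetry; auto].
Qed.

Record world : Type := { root : form -> Prop; trail : path; trail_wf : wf_path root trail }.

Definition theory (w : world) : form -> Prop := last_state (root w) (trail w).

Lemma theory_mcs w : maximal_consistent (theory w).
Proof. exact (proj1 (wf_path_last (trail_wf w))). Qed.

Lemma theory_agree w : Kempty_agree (theory w).
Proof. exact (proj2 (wf_path_last (trail_wf w))). Qed.

Definition world_sim (a : Agent) (w w' : world) : Prop :=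
  root w = root w' /\ strip a (trail w) = strip a (trail w').

Lemma world_sim_refl a w : world_sim a w w.
Proof. split; reflexivity. Qed.

Lemma world_sim_sym a w u : world_sim a w u -> world_sim a u w.
Proof. intros [H1 H2]. split; symmetry; assumption. Qed.

Lemma world_sim_trans a w u x : world_sim a w u -> world_sim a u x -> world_sim a w x.
Proof. intros [H1 H2] [H3 H4]. split; congruence. Qed.

Lemma world_sim_Kn C w w' : cnonempty C -> (forall a, C a -> world_sim a w w') ->
  forall psi, theory w (Kn C psi) <-> theory w' (Kn C psi).
Proof.
  intros [a0 Ca0] Hsim. destruct w as [r p Hp], w' as [r' p' Hp'].
  destruct (Hsim a0 Ca0) as [Hr _]. simpl in Hr. subst r'.
  apply (strip_eq_Kn (ex_intro _ a0 Ca0) Hp Hp'). intros a Ca. apply (Hsim a Ca).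
Qed.

Lemma root_world Y : maximal_consistent Y -> Kempty_agree Y -> exists w, theory w = Y.
Proof. intros HY HagY. exists {| root := Y; trail := []; trail_wf := conj HY HagY |}. reflexivity. Qed.

Lemma leads_root_world w s Y : maximal_consistent Y -> leads (theory w) s Y ->
  exists w', theory w' = Y.
Proof.
  intros HY HwY. apply root_world; [exact HY|]. intros psi.
  rewrite (leads_Kn_empty (theory_mcs w) HY HwY psi). apply theory_agree.
Qed.

Lemma Kn_child w C f : ~ theory w (Kn C f) ->
  exists w', (forall a, C a -> world_sim a w w') /\ ~ theory w' f /\
             forall psi, theory w (Kn C psi) -> theory w' psi.
Proof.
  intros Hn. destruct (mcs_Kn_witness (theory_mcs w) Hn) as [Y [HY [HwY Hf]]].
  exists {| root := root w; trail := (C, Y) :: trail w; trail_wf := conj (trail_wf w) (conj HY HwY) |}.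
  split; [|split].
  - intros a Ca. split; [reflexivity|]. simpl. symmetry. apply strip_cons_in, Ca.
  - exact (proj1 (mcs_neg HY f) Hf).
  - exact HwY.
Qed.

Definition canonical : ETS Agent :=
  {| W := world; sim := world_sim; sim_refl := world_sim_refl; sim_sym := world_sim_sym;
     sim_trans := world_sim_trans; V := vote; V_inhabited := inhabits None;
     M := fun w s w' => leads (theory w) s (theory w');
     pi := fun p w => theory w (Var Agent p) |}.

Lemma canonical_regular : regular canonical.
Proof.
  intros w s.
  assert (Hn : ~ theory w (Hw (fun _ => True) Bot)).
  { apply (mcs_neg (theory_mcs w)), (mcs_derivable (theory_mcs w)), ax_unach. }
  destruct (goals_extend (s := s) (theory_mcs w) (fun a Hna => False_ind _ (Hna I)) Hn)
    as [Y [HY [HwY _]]].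
  destruct (leads_root_world HY HwY) as [w' <-]. exists w'. exact HwY.
Qed.

Lemma hsim_a_refl a (h : hist canonical) : hsim_a a h h.
Proof. induction h; simpl; auto using world_sim_refl. Qed.

Lemma hsim_Kn C (h h' : hist canonical) psi : hsim C h h' ->
  theory (Defs.hd h) (Kn C psi) -> theory (Defs.hd h') (Kn C psi).
Proof.
  intros Hsim. destruct (classic (cnonempty C)) as [HC|HC].
  - intros HK. refine (proj1 (world_sim_Kn HC _ psi) HK). intros a Ca. specialize (Hsim a Ca).
    destruct h, h'; simpl in *; tauto.
  - assert (C = cempty) as -> by (apply coalition_ext; firstorder).
    intros HK. apply (theory_agree (Defs.hd h') psi), (theory_agree (Defs.hd h) psi), HK.
Qed.

Lemma Kn_counter_history C f (h : hist canonical) : is_hist h -> ~ theory (Defs.hd h) (Kn C f) ->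
  exists h', is_hist h' /\ hsim C h h' /\ ~ theory (Defs.hd h') f.
Proof.
  intros Hh Hn. destruct (Kn_child Hn) as [w' [Hsim [Hf HKf]]].
  destruct h as [w|h0 s w].
  - exists (hInit canonical w'). simpl. auto.
  - destruct (classic (cnonempty C)) as [HC|HC].
    + exists (hExt h0 (restrict C s) w'). destruct Hh as [Hh0 Hstep]. split; [split|split].
      * exact Hh0.
      * exact (leads_restrict Hstep HC HKf).
      * intros a Ca. simpl. split; [apply hsim_a_refl|split; [symmetry; apply restrict_in, Ca|apply Hsim, Ca]].
      * exact Hf.
    + exists (hInit canonical w'). split; [exact I|split; [|exact Hf]].
      intros a Ca. exfalso. apply HC. exists a. exact Ca.
Qed.

Lemma Hw_counter_history C f (h : hist canonical) s : is_hist h -> ~ theory (Defs.hd h) (Hw C f) ->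
  exists s' w', is_hist (hExt h s' w') /\ agree_on canonical C s s' /\ ~ theory w' f.
Proof.
  intros Hh Hn.
  destruct (goals_extend (s := restrict C s) (theory_mcs _) (fun a HnC => restrict_out s HnC) Hn)
    as [Y [HY [HhY Hf]]].
  destruct (leads_root_world HY HhY) as [w' <-].
  exists (restrict C s), w'. split; [split; assumption|split].
  - intros a Ca. symmetry. apply restrict_in, Ca.
  - exact (proj1 (mcs_neg HY f) Hf).
Qed.

Lemma Hw_forces C f (h h' : hist canonical) s' w' : theory (Defs.hd h) (Hw C f) ->
  is_hist (hExt h' s' w') -> hsim C h h' -> agree_on canonical C (fun _ => Some (f, C)) s' ->
  theory w' f.
Proof.
  intros HH [_ Hstep] Hsim Hag. apply Hstep. exists C, f. split; [|split; [|constructor]].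
  - refine (mcs_mp (theory_mcs _) (ax_truth C _) (hsim_Kn Hsim _)).
    exact (mcs_mp (theory_mcs _) (ax_spi C f) HH).
  - intros a Ca. rewrite <- (Hag a Ca). reflexivity.
Qed.

Lemma truth f : forall h : hist canonical, is_hist h -> (sat h f <-> theory (Defs.hd h) f).
Proof.
  induction f as [n|f IH|f1 IH1 f2 IH2|C f IH|C f IH]; intros h Hh; simpl.
  - reflexivity.
  - rewrite IH by exact Hh. symmetry. apply mcs_neg, theory_mcs.
  - rewrite IH1, IH2 by exact Hh. symmetry. apply mcs_imp, theory_mcs.
  - split.
    + intros Hsat. apply NNPP. intros Hn.
      destruct (Kn_counter_history Hh Hn) as [h' [Hh' [Hsim Hf]]].
      apply Hf, IH, Hsat; assumption.
    + intros HK h' Hh' Hsim. apply IH; [exact Hh'|].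
      exact (mcs_mp (theory_mcs _) (ax_truth C f) (hsim_Kn Hsim HK)).
  - split.
    + intros [s Hs]. apply NNPP. intros Hn.
      destruct (Hw_counter_history s Hh Hn) as [s' [w' [Hh' [Hag Hf]]]].
      apply Hf, (IH _ Hh'), Hs; [exact Hh'|intros a _; apply hsim_a_refl|exact Hag].
    + intros HH. exists (fun _ => Some (f, C)). intros h' s' w' Hh' Hsim Hag.
      apply (IH (hExt h' s' w') Hh'). exact (Hw_forces HH Hh' Hsim Hag).
Qed.

End CanonicalModel.
End Completeness.

Theorem theorem2 (Agent : Type) (f : form Agent) :
  (forall (E : ETS Agent), regular E ->
     forall h : hist E, is_hist h -> sat h f) ->
  derivable f.
Proof.
  intros Hvalid. apply NNPP. intros Hnot.
  destruct (lindenbaum (underivable_consistent Hnot)) as [X0 [HX0 Hneg]].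
  destruct (root_world (X0 := X0) HX0 (fun psi => iff_refl _)) as [w0 Hw0].
  assert (Hsat := Hvalid (canonical X0) (canonical_regular (X0 := X0)) (hInit (canonical X0) w0) I).
  apply (truth (h := hInit (canonical X0) w0) f I) in Hsat. simpl in Hsat. rewrite Hw0 in Hsat.
  exact (proj1 (mcs_neg HX0 f) (Hneg _ eq_refl) Hsat).
Qed.
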